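(* (Completeness) Let $\mathfrak M=(\mathfrak T,\mathcal V)$ be a TFL model and $\phi$ a TFL formula in positive normal form, and let $H_0=(\mathfrak X(s_0),t_\epsilon)$ be the initial process. If $H_0\in[\![\phi]\!]^{\mathfrak T}_{\mathcal V}$, then Eve has a winning strategy in the model-checking game $\mathcal G(H_0,\phi)$.
   Context: Systems: $\mathfrak T=(S,s_0,T,I,\Sigma)$, a transition system with independence (states $S$, initial $s_0$, labels $\Sigma$, transitions $T\subseteq S\times\Sigma\times S$, irreflexive symmetric independence $I\subseteq T\times T$ satisfying the standard TSI axioms), image-finite. For $t=(s,a,s')$: $\sigma(t)=s,\tau(t)=s',\delta(t)=a$. $t\otimes t'$ iff $\sigma(t)=\sigma(t')\wedge tIt'$; $t\ominus t'$ iff $\tau(t)=\sigma(t')\wedge tIt'$; $t\le t'$ iff $\tau(t)=\sigma(t')\wedge\neg tIt'$. $\mathfrak X(s)$ = transitions with source $s$; conflict-free set = set with common source, pairwise $\otimes$; support sets = the $\mathfrak X(s)$ and non-empty conflict-free sets; $M\sqsubseteq R$ iff $M\subseteq R$ and no $t\in R\setminus M$ has $t\otimes t'$ for all $t'\in M$; $\mathcal X$ = all $\mathfrak X(s)$ and all support sets $M\sqsubseteq\mathfrak X(s)$; $\mathfrak A=T\cup\{t_\epsilon\}$ with fresh $t_\epsilon$, $\tau(t_\epsilon)=s_0$, $t_\epsilon\le t$ whenever $\sigma(t)=s_0$, never $t_\epsilon\ominus t$; processes $\mathfrak S=\mathcal X\times\mathfrak A$. TFL: formulas $\phi::=Z\mid\neg\phi\mid\phi\wedge\phi\mid\langle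 a\rangle_c\phi\mid\langle a\rangle_{nc}\phi\mid\langle\otimes\rangle\phi\mid\mu Z.\phi$ (free occurrences of $Z$ in $\mu Z.\phi$ under an even number of negations), with duals $\vee$, $[a]_c=\neg\langle a\rangle_c\neg$, $[a]_{nc}$, $[\otimes]=\neg\langle\otimes\rangle\neg$, $\nu Z.\phi=\neg\mu Z.\neg\phi[\neg Z/Z]$. A model is $(\mathfrak T,\mathcal V)$ with $\mathcal V:\mathrm{Var}\to2^{\mathfrak S}$. Semantics in $2^{\mathfrak S}$: $[\![Z]\!]=\mathcal V(Z)$, $\neg$ complement, $\wedge$ intersection, $[\![\langle a\rangle_c\phi]\!]=\{(R,t):\exists r\in R.\ \delta(r)=a,\ t\le r,\ (\mathfrak X(\tau(r)),r)\in[\![\phi]\!]\}$, $\langle a\rangle_{nc}$ likewise with $t\ominus r$, $[\![\langle\otimes\rangle\phi]\!]=\{(R,t):\exists M\in\mathcal X.\ M\sqsubseteq R,\ (M,t)\in[\![\phi]\!]\}$, $[\![\mu Z.\phi]\!]_{\mathcal V}=\bigcap\{Q\subseteq\mathfrak S:[\![\phi]\!]_{\mathcal V[Z:=Q]}\subseteq Q\}$. Positive normal form: negation only on variables, no two binders bind the same variable. $Sub(\phi)$ is the set of subformulas. Model-checking game $\mathcal G(H_0,\phi)$ between Eve and Adam: configurations $H\vdash\psi$ with $H\in\mathfrak S$, $\psi\in Sub(\phi)$; start $H_0\vdash\phi$. Rules: $H\vdash\mu Z.\psi$ or $H\vdash\nu Z.\psi$ moves to $H\vdash Z$; $H\vdash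 Z$ with $Z$ bound by $\mu Z.\psi$ or $\nu Z.\psi$ moves to $H\vdash\psi$; at $H\vdash\psi_0\vee\psi_1$ Eve (at $\wedge$, Adam) chooses $H\vdash\psi_i$; at $(R,t)\vdash\langle a\rangle_c\psi$ Eve (at $[a]_c\psi$, Adam) chooses $r\in R$ with $\delta(r)=a$, $t\le r$, moving to $(\mathfrak X(\tau(r)),r)\vdash\psi$; same for $\langle a\rangle_{nc}$/$[a]_{nc}$ with $t\ominus r$; at $(R,t)\vdash\langle\otimes\rangle\psi$ Eve (at $[\otimes]\psi$, Adam) chooses $M\in\mathcal X$ with $M\sqsubseteq R$, moving to $(M,t)\vdash\psi$. Adam wins a play iff it ends at $H\vdash Z$ ($Z$ free) with $H\notin\mathcal V(Z)$, or at a diamond configuration ($\langle a\rangle_c$, $\langle a\rangle_{nc}$, $\langle\otimes\rangle$) with no available choice, or is infinite and the syntactically outermost variable occurring infinitely often is bound by a $\mu$; Eve wins dually (ends at $H\vdash Z$ with $H\in\mathcal V(Z)$, at a box configuration with no available choice, or infinite with the outermost infinitely-often variable bound by a $\nu$). A player has a winning strategy if she/he can guarantee winning every play. *)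

From Stdlib Require Import List Relations Arith.
Import ListNotations.


Record trans (S L : Type) := mkTr { src : S; lbl : L; tgt : S }.
Arguments mkTr {S L}.
Arguments src {S L}.
Arguments lbl {S L}.
Arguments tgt {S L}.

Record TS := mkTS {
  St  : Type;
  s0  : St;
  Lab : Type;
  Tr  : trans St Lab -> Prop;
  Ind : trans St Lab -> trans St Lab -> Prop }.

Notation Trans M := (trans (St M) (Lab M)).

Definition sim_step (M : TS) (t t' : Trans M) : Prop :=
  exists s a s1 s2 u b,
    t = mkTr s a s1 /\ t' = mkTr s2 a u /\
    Ind M (mkTr s a s1) (mkTr s b s2) /\
    Ind M (mkTr s a s1) (mkTr s1 b u) /\
    Ind M (mkTr s b s2) (mkTr s2 a u).

Definition sim (M : TS) : relation (Trans M) :=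
  clos_refl_sym_trans _ (@sim_step M).

Definition TSI_axioms (M : TS) : Prop :=
  (forall t t', Ind M t t' -> Tr M t /\ Tr M t') /\
  (forall t, ~ Ind M t t) /\
  (forall t t', Ind M t t' -> Ind M t' t) /\
  (forall s a s1 s2, sim M (mkTr s a s1) (mkTr s a s2) -> s1 = s2) /\
  (forall s a b s1 s2, Ind M (mkTr s a s1) (mkTr s b s2) ->
     exists u, Ind M (mkTr s a s1) (mkTr s1 b u) /\ Ind M (mkTr s b s2) (mkTr s2 a u)) /\
  (forall s a b s1 u, Ind M (mkTr s a s1) (mkTr s1 b u) ->
     exists s2, Ind M (mkTr s a s1) (mkTr s b s2) /\ Ind M (mkTr s b s2) (mkTr s2 a u)) /\
  (forall t t' w, sim M t t' -> Ind M t' w -> Ind M t w).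

Definition image_finite (M : TS) : Prop :=
  forall (s : St M) (a : Lab M), exists l : list (St M),
    forall s', Tr M (mkTr s a s') -> In s' l.

Definition otimes {M : TS} (t t' : Trans M) : Prop := src t = src t' /\ Ind M t t'.

Definition Xs {M : TS} (s : St M) : Trans M -> Prop := fun t => Tr M t /\ src t = s.

Definition conflict_free {M : TS} (R : Trans M -> Prop) : Prop :=
  (forall t, R t -> Tr M t) /\
  (exists s, forall t, R t -> src t = s) /\
  (forall t t', R t -> R t' -> t <> t' -> otimes t t').

Definition support_set {M : TS} (R : Trans M -> Prop) : Prop :=
  (exists s, forall t, R t <-> Xs s t) \/ (conflict_free R /\ exists t, R t).

Definition sqsub {M : TS} (Ms R : Trans M -> Prop) : Prop :=
  (forall t, Ms t -> R t) /\
  ~ (exists t, R t /\ ~ Ms t /\ forall t', Ms t' -> otimes t t').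

Definition inX {M : TS} (R : Trans M -> Prop) : Prop :=
  (exists s, forall t, R t <-> Xs s t) \/
  (support_set R /\ exists s, sqsub R (Xs s)).

Inductive ext (M : TS) := teps | etr (t : Trans M).
Arguments teps {M}.
Arguments etr {M} t.

Definition ext_ok {M : TS} (e : ext M) : Prop :=
  match e with teps => True | etr t => Tr M t end.

Definition le_ext {M : TS} (e : ext M) (r : Trans M) : Prop :=
  match e with
  | teps => src r = s0 M
  | etr t => tgt t = src r /\ ~ Ind M t r
  end.

Definition om_ext {M : TS} (e : ext M) (r : Trans M) : Prop :=
  match e with
  | teps => False
  | etr t => tgt t = src r /\ Ind M t r
  end.

Record Proc (M : TS) := mkProc {
  pR : Trans M -> Prop;
  pt : ext M;
  pR_ok : @inX M pR;
  pt_ok : @ext_ok M pt }.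
Arguments pR {M} _ _.
Arguments pt {M} _.
Arguments mkProc {M} _ _ _ _.

Lemma Xs_inX (M : TS) (s : St M) : inX (Xs s).
Proof. left; exists s; tauto. Qed.

Definition succP {M : TS} (r : Trans M) (hr : Tr M r) : Proc M :=
  mkProc (Xs (tgt r)) (etr r) (Xs_inX M (tgt r)) hr.

Definition H0 (M : TS) : Proc M :=
  mkProc (Xs (s0 M)) teps (Xs_inX M (s0 M)) I.

Inductive form (L : Type) :=
| fvar  (Z : nat)
| fneg  (a : form L)
| fand  (a b : form L)
| f_or  (a b : form L)
| fdiac (x : L) (a : form L)
| fboxc (x : L) (a : form L)
| fdianc (x : L) (a : form L)
| fboxnc (x : L) (a : form L)
| fdiao (a : form L)
| fboxo (a : form L)
| fmu (Z : nat) (a : form L)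
| fnu (Z : nat) (a : form L).
Arguments fvar {L} Z.
Arguments fneg {L}.
Arguments fand {L}.
Arguments f_or {L}.
Arguments fdiac {L}.
Arguments fboxc {L}.
Arguments fdianc {L}.
Arguments fboxnc {L}.
Arguments fdiao {L}.
Arguments fboxo {L}.
Arguments fmu {L}.
Arguments fnu {L}.

Definition upd {M : TS} (V : nat -> Proc M -> Prop) (Z : nat) (Q : Proc M -> Prop)
  : nat -> Proc M -> Prop :=
  fun Y => if Nat.eqb Y Z then Q else V Y.

Definition dia_c {M : TS} (P : Proc M -> Prop) (x : Lab M) (H : Proc M) : Prop :=
  exists r (hr : Tr M r), pR H r /\ lbl r = x /\ le_ext (pt H) r /\ P (succP r hr).

Definition dia_nc {M : TS} (P : Proc M -> Prop) (x : Lab M) (H : Proc M) : Prop :=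
  exists r (hr : Tr M r), pR H r /\ lbl r = x /\ om_ext (pt H) r /\ P (succP r hr).

Definition dia_o {M : TS} (P : Proc M -> Prop) (H : Proc M) : Prop :=
  exists H' : Proc M, pt H' = pt H /\ sqsub (pR H') (pR H) /\ P H'.

(* [[phi]]_V ; derived operators by their defining dualities *)
Fixpoint sem {M : TS} (V : nat -> Proc M -> Prop) (phi : form (Lab M)) {struct phi}
  : Proc M -> Prop :=
  match phi with
  | fvar Z => V Z
  | fneg a => fun H => ~ sem V a H
  | fand a b => fun H => sem V a H /\ sem V b H
  | f_or a b => fun H => ~ (~ sem V a H /\ ~ sem V b H)
  | fdiac x a => dia_c (sem V a) x
  | fboxc x a => fun H => ~ dia_c (fun H' => ~ sem V a H') x H
  | fdianc x a => dia_nc (sem V a) x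
  | fboxnc x a => fun H => ~ dia_nc (fun H' => ~ sem V a H') x H
  | fdiao a => dia_o (sem V a)
  | fboxo a => fun H => ~ dia_o (fun H' => ~ sem V a H') H
  | fmu Z a => fun H =>
      forall Q : Proc M -> Prop, (forall H', sem (upd V Z Q) a H' -> Q H') -> Q H
  | fnu Z a => fun H =>   (* nu Z.a := ~ mu Z. ~ a[~Z/Z] *)
      ~ (forall Q : Proc M -> Prop,
           (forall H', ~ sem (upd V Z (fun x => ~ Q x)) a H' -> Q H') -> Q H)
  end.

Definition children {L : Type} (phi : form L) : list (form L) :=
  match phi with
  | fvar _ => []
  | fneg a | fdiac _ a | fboxc _ a | fdianc _ a | fboxnc _ a
  | fdiao a | fboxo a | fmu _ a | fnu _ a => [a]
  | fand a b | f_or a b => [a; b]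
  end.

Inductive subf {L : Type} (psi : form L) : form L -> Prop :=
| subf_refl : subf psi psi
| subf_step : forall phi c, In c (children phi) -> subf psi c -> subf psi phi.

Fixpoint bv {L : Type} (phi : form L) : list nat :=
  match phi with
  | fvar _ => []
  | fneg a | fdiac _ a | fboxc _ a | fdianc _ a | fboxnc _ a
  | fdiao a | fboxo a => bv a
  | fand a b | f_or a b => bv a ++ bv b
  | fmu Z a | fnu Z a => Z :: bv a
  end.

Fixpoint occurs_free {L : Type} (Z : nat) (phi : form L) : Prop :=
  match phi with
  | fvar Y => Y = Z
  | fneg a | fdiac _ a | fboxc _ a | fdianc _ a | fboxnc _ a
  | fdiao a | fboxo a => occurs_free Z a
  | fand a b | f_or a b => occurs_free Z a \/ occurs_free Z b
  | fmu Y a | fnu Y a => Y <> Z /\ occurs_free Z a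
  end.

(* positive normal form (with the formation condition on binders and the
   convention that bound variables do not also occur free) *)
Definition pnf {L : Type} (phi : form L) : Prop :=
  (forall psi, subf (fneg psi) phi -> exists Z, psi = fvar Z) /\
  NoDup (bv phi) /\
  (forall Z, In Z (bv phi) -> ~ occurs_free Z phi /\ ~ subf (fneg (fvar Z)) phi).

Definition conf (M : TS) : Type := (Proc M * form (Lab M))%type.

Definition move {M : TS} (phi : form (Lab M)) (c c' : conf M) : Prop :=
  match c with
  | (H, psi) =>
    match psi with
    | fvar Z => exists B, (subf (fmu Z B) phi \/ subf (fnu Z B) phi) /\ c' = (H, B)
    | fneg _ => False
    | fand a b | f_or a b => c' = (H, a) \/ c' = (H, b)
    | fdiac x a | fboxc x a =>
        exists r (hr : Tr M r), pR H r /\ lbl r = x /\ le_ext (pt H) r /\ c' = (succP r hr, a)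
    | fdianc x a | fboxnc x a =>
        exists r (hr : Tr M r), pR H r /\ lbl r = x /\ om_ext (pt H) r /\ c' = (succP r hr, a)
    | fdiao a | fboxo a =>
        exists H' : Proc M, pt H' = pt H /\ sqsub (pR H') (pR H) /\ c' = (H', a)
    | fmu Z _ | fnu Z _ => c' = (H, fvar Z)
    end
  end.

Definition eve_pos {M : TS} (c : conf M) : Prop :=
  match snd c with
  | f_or _ _ | fdiac _ _ | fdianc _ _ | fdiao _ => True
  | _ => False
  end.

Definition eve_wins_end {M : TS} (V : nat -> Proc M -> Prop) (c : conf M) : Prop :=
  match c with
  | (H, fvar Z) => V Z H
  | (H, fneg (fvar Z)) => ~ V Z H
  | (_, fboxc _ _) | (_, fboxnc _ _) | (_, fboxo _) => True
  | _ => False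
  end.

Definition inf_often {M : TS} (pi : nat -> conf M) (Z : nat) : Prop :=
  forall N, exists n, N <= n /\ snd (pi n) = fvar Z.

Definition binder_of {L : Type} (phi : form L) (Z : nat) (B : form L) : Prop :=
  subf B phi /\ exists psi, B = fmu Z psi \/ B = fnu Z psi.

(* Eve wins an infinite play: the outermost variable occurring infinitely
   often is bound by a nu *)
Definition eve_wins_inf {M : TS} (phi : form (Lab M)) (pi : nat -> conf M) : Prop :=
  exists Z psi, inf_often pi Z /\ subf (fnu Z psi) phi /\
    forall Y, inf_often pi Y -> exists BY, binder_of phi Y BY /\ subf BY (fnu Z psi).

Definition hist {M : TS} (pi : nat -> conf M) (i : nat) : list (conf M) :=
  map pi (seq 0 i).

Definition eve_has_winning_strategy {M : TS} (V : nat -> Proc M -> Prop)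
  (phi : form (Lab M)) (c0 : conf M) : Prop :=
  exists sigma : list (conf M) -> conf M -> conf M,
    (forall h c, eve_pos c -> (exists c', move phi c c') -> move phi c (sigma h c)) /\
    (forall (pi : nat -> conf M) (n : nat),
        pi 0 = c0 ->
        (forall i, i < n -> move phi (pi i) (pi (S i))) ->
        (forall i, i < n -> eve_pos (pi i) -> pi (S i) = sigma (hist pi i) (pi i)) ->
        (forall c', ~ move phi (pi n) c') ->
        eve_wins_end V (pi n)) /\
    (forall pi : nat -> conf M,
        pi 0 = c0 ->
        (forall i, move phi (pi i) (pi (S i))) ->
        (forall i, eve_pos (pi i) -> pi (S i) = sigma (hist pi i) (pi i)) ->
        eve_wins_inf phi pi).

From Stdlib Require Import List Relations Arith Lia Classical ClassicalEpsilon FunctionalExtensionality.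
Import ListNotations.

(* Eve's strategy is built by induction on the subformulas psi of phi, with the
   invariant: if H satisfies psi in an environment E that agrees with V off the
   bound variables of phi, Eve can make every play from (H, psi) either be won
   outright or reach a variable bound outside psi at a process where E holds.  For mu Z.a, the set of
   processes from which Eve forces the play through Z is a pre-fixed point of the
   semantics of a, so it contains the least fixed point, and Eve switches to that
   strategy at the first visit of Z.  For nu Z.a, a post-fixed set P witnesses the
   greatest fixed point, and Eve restarts her strategy for a at every visit of Z
   inside P; a play that restarts infinitely often never leaves nu Z.a, so Z is the
   outermost variable it visits infinitely often. *)

Lemma least_witness (P : nat -> Prop) (n : nat) :
  P n -> exists k, k <= n /\ P k /\ forall j, j < k -> ~ P j.
Proof.
  revert P; induction n as [|n IH]; intros P HP.
  - exists 0; repeat split; auto; lia.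
  - destruct (classic (P 0)) as [H0|H0].
    + exists 0; repeat split; auto; lia.
    + destruct (IH (fun k => P (S k)) HP) as [k [Hk [HPk Hmin]]].
      exists (S k); repeat split; auto; try lia.
      intros [|j] Hj; auto. apply Hmin; lia.
Qed.

Lemma greatest_witness (P : nat -> Prop) (n : nat) :
  P 0 -> exists k, k <= n /\ P k /\ forall j, k < j <= n -> ~ P j.
Proof.
  induction n as [|n IH]; intros H0.
  - exists 0; repeat split; auto; lia.
  - destruct (classic (P (S n))) as [HS|HS].
    + exists (S n); repeat split; auto; lia.
    + destruct (IH H0) as [k [Hk [HPk Hmax]]].
      exists k; repeat split; auto; intros j Hj.
      destruct (Nat.eq_dec j (S n)) as [->|]; auto. apply Hmax; lia.
Qed.

Lemma NoDup_app_disjoint {A : Type} (l1 l2 : list A) x :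
  NoDup (l1 ++ l2) -> In x l1 -> In x l2 -> False.
Proof.
  induction l1 as [|y l1 IH]; simpl; intros HN H1 H2; auto.
  inversion HN; subst; destruct H1 as [<-|H1]; eauto using in_or_app.
Qed.

Definition decP (P : Prop) : bool := if excluded_middle_informative P then true else false.

Lemma decP_true (P : Prop) : P -> decP P = true.
Proof. unfold decP; destruct excluded_middle_informative; tauto. Qed.

Lemma decP_false (P : Prop) : ~ P -> decP P = false.
Proof. unfold decP; destruct excluded_middle_informative; tauto. Qed.

(** * Plays and strategies *)

Section Plays.
Context {C : Type}.
Implicit Types (pi : nat -> C) (P : C -> Prop).

Definition shift pi (k : nat) : nat -> C := fun i => pi (k + i).

Lemma shift_sub pi k n : k <= n -> shift pi k (n - k) = pi n.
Proof. intros Hk; unfold shift; f_equal; lia. Qed.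

Definition history pi (i : nat) : list C := map pi (seq 0 i).

Lemma history_S pi i : history pi (S i) = history pi i ++ [pi i].
Proof. unfold history; rewrite seq_S, map_app; reflexivity. Qed.

Lemma map_seq_history pi k m : map pi (seq k m) = history (shift pi k) m.
Proof.
  induction m as [|m IH]; [reflexivity|].
  rewrite history_S, seq_S, map_app, IH; reflexivity.
Qed.

Lemma skipn_history pi k i : k <= i -> skipn k (history pi i) = history (shift pi k) (i - k).
Proof.
  intros Hk; unfold history at 1.
  replace i with (k + (i - k)) at 1 by lia.
  rewrite seq_app, map_app, skipn_app, length_map, length_seq, Nat.sub_diag, skipn_all2
    by (rewrite length_map, length_seq; lia).
  apply map_seq_history.
Qed.

Lemma nth_history pi i k d : k < i -> nth k (history pi i) d = pi k.
Proof.
  intros Hk; unfold history.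
  rewrite nth_indep with (d' := pi 0) by (rewrite length_map, length_seq; lia).
  rewrite map_nth, seq_nth by lia; reflexivity.
Qed.

Fixpoint first_index P (l : list C) : option nat :=
  match l with
  | [] => None
  | x :: l' => if decP (P x) then Some 0 else option_map S (first_index P l')
  end.

Fixpoint last_index P (l : list C) : option nat :=
  match l with
  | [] => None
  | x :: l' =>
      match last_index P l' with
      | Some k => Some (S k)
      | None => if decP (P x) then Some 0 else None
      end
  end.

Lemma first_index_none P pi s n :
  (forall j, j < n -> ~ P (pi (s + j))) -> first_index P (map pi (seq s n)) = None.
Proof.
  revert s; induction n as [|n IH]; intros s Hn; [reflexivity|]; simpl.
  rewrite decP_false, IH; auto.
  - intros j Hj; rewrite Nat.add_succ_comm; apply Hn; lia.
  - rewrite <- (Nat.add_0_r s); apply Hn; lia.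
Qed.

Lemma first_index_some P pi s n k :
  k < n -> P (pi (s + k)) -> (forall j, j < k -> ~ P (pi (s + j))) ->
  first_index P (map pi (seq s n)) = Some k.
Proof.
  revert s k; induction n as [|n IH]; intros s k Hk HP Hmin; [lia|]; simpl.
  destruct k as [|k].
  - rewrite Nat.add_0_r in HP; rewrite decP_true; auto.
  - rewrite decP_false by (rewrite <- (Nat.add_0_r s); apply Hmin; lia).
    rewrite (IH (S s) k); auto; try lia.
    + rewrite Nat.add_succ_comm; auto.
    + intros j Hj; rewrite Nat.add_succ_comm; apply Hmin; lia.
Qed.

Lemma last_index_none P pi s n :
  (forall j, j < n -> ~ P (pi (s + j))) -> last_index P (map pi (seq s n)) = None.
Proof.
  revert s; induction n as [|n IH]; intros s Hn; [reflexivity|]; simpl.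
  rewrite IH, decP_false; auto.
  - rewrite <- (Nat.add_0_r s); apply Hn; lia.
  - intros j Hj; rewrite Nat.add_succ_comm; apply Hn; lia.
Qed.

Lemma last_index_some P pi s n k :
  k < n -> P (pi (s + k)) -> (forall j, k < j < n -> ~ P (pi (s + j))) ->
  last_index P (map pi (seq s n)) = Some k.
Proof.
  revert s k; induction n as [|n IH]; intros s k Hk HP Hmax; [lia|]; simpl.
  destruct k as [|k].
  - rewrite Nat.add_0_r in HP; rewrite last_index_none, decP_true; auto.
    intros j Hj; rewrite Nat.add_succ_comm; apply Hmax; lia.
  - rewrite (IH (S s) k); auto; try lia.
    + rewrite Nat.add_succ_comm; auto.
    + intros j Hj; rewrite Nat.add_succ_comm; apply Hmax; lia.
Qed.

Lemma first_index_history_none P pi i :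
  (forall j, j <= i -> ~ P (pi j)) -> first_index P (history pi (S i)) = None.
Proof. intros Hn; apply first_index_none; intros j Hj; apply Hn; lia. Qed.

Lemma first_index_history P pi k i :
  k <= i -> P (pi k) -> (forall j, j < k -> ~ P (pi j)) ->
  first_index P (history pi (S i)) = Some k.
Proof. intros Hk HP Hmin; apply first_index_some; [lia|exact HP|exact Hmin]. Qed.

Lemma last_index_history P pi k i :
  k <= i -> P (pi k) -> (forall j, k < j <= i -> ~ P (pi j)) ->
  last_index P (history pi (S i)) = Some k.
Proof. intros Hk HP Hmax; apply last_index_some; [lia|exact HP|intros j Hj; apply Hmax; lia]. Qed.

Lemma shift_0 pi k : shift pi k 0 = pi k.
Proof. unfold shift; f_equal; lia. Qed.

Lemma shift_shift pi k l : shift (shift pi k) l = shift pi (k + l).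
Proof. apply functional_extensionality; intros i; unfold shift; f_equal; lia. Qed.

End Plays.

Section Games.
Context {C : Type} {mv : C -> C -> Prop} {eve : C -> Prop}.
Implicit Types (pi : nat -> C) (c : C).

Definition strategy := list C -> C -> C.

Definition legal (s : strategy) : Prop :=
  forall h c, eve c -> (exists c', mv c c') -> mv c (s h c).

Definition consistent (s : strategy) pi (n : nat) : Prop :=
  (forall i, i < n -> mv (pi i) (pi (S i))) /\
  (forall i, i < n -> eve (pi i) -> pi (S i) = s (history pi i) (pi i)).

Lemma consistent_le s pi n m : m <= n -> consistent s pi n -> consistent s pi m.
Proof. intros Hm [Hmv Hs]; split; intros i Hi; [apply Hmv|apply Hs]; lia. Qed.

Lemma consistent_shift s t pi k n :
  (forall i, k <= i < k + n -> eve (pi i) ->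
     s (history pi i) (pi i) = t (history (shift pi k) (i - k)) (pi i)) ->
  consistent s pi (k + n) -> consistent t (shift pi k) n.
Proof.
  intros Hst [Hmv Hs]; split; intros i Hi; unfold shift; rewrite Nat.add_succ_r.
  - apply Hmv; lia.
  - intros He. rewrite Hs, Hst by (auto; lia). do 3 f_equal; lia.
Qed.

Definition any_move : strategy := fun _ c => epsilon (inhabits c) (fun c' => mv c c').

Lemma legal_any_move : legal any_move.
Proof. intros h c _ Hc. exact (epsilon_spec (inhabits c) (fun c' => mv c c') Hc). Qed.

(* [resume anchor s0 tau] plays [s0] until [anchor] designates a configuration
   [pi k] of the play, and from then on plays [tau (pi k)] on the suffix starting there. *)
Definition resume (anchor : list C -> option nat) (s0 : strategy) (tau : C -> strategy)
  : strategy :=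
  fun h c =>
    match anchor (h ++ [c]) with
    | None => s0 h c
    | Some k => tau (nth k (h ++ [c]) c) (skipn k h) c
    end.

Lemma legal_resume anchor s0 tau :
  legal s0 -> (forall c, legal (tau c)) -> legal (resume anchor s0 tau).
Proof. intros H0 Ht h c He Hc; unfold resume; destruct anchor; auto; apply Ht; auto. Qed.

Lemma consistent_resume_before anchor s0 tau pi n :
  (forall i, i < n -> anchor (history pi (S i)) = None) ->
  consistent (resume anchor s0 tau) pi n -> consistent s0 pi n.
Proof.
  intros Hnone [Hmv Hs]; split; auto.
  intros i Hi He; rewrite Hs by auto; unfold resume.
  rewrite <- history_S, Hnone; auto.
Qed.

Lemma consistent_resume_after anchor s0 tau pi k n :
  (forall i, k <= i < k + n -> anchor (history pi (S i)) = Some k) ->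
  consistent (resume anchor s0 tau) pi (k + n) -> consistent (tau (pi k)) (shift pi k) n.
Proof.
  intros Hsome; apply consistent_shift; intros i Hi _; unfold resume.
  rewrite <- history_S, Hsome, nth_history, skipn_history by lia; reflexivity.
Qed.

Definition from_second (l : list C) : option nat :=
  match l with _ :: _ :: _ => Some 1 | _ => None end.

Lemma from_second_history pi i : 1 <= i -> from_second (history pi (S i)) = Some 1.
Proof. destruct i as [|[|i]]; [lia|reflexivity|reflexivity]. Qed.

Context {endwin : C -> Prop} {infwin : (nat -> C) -> Prop}.

Record wins_until (T Ok : C -> Prop) (s : strategy) (c0 : C) : Prop := {
  wins_legal : legal s;
  wins_target : forall pi n, pi 0 = c0 -> consistent s pi n ->
    (forall i, i < n -> ~ T (pi i)) -> T (pi n) -> Ok (pi n);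
  wins_end : forall pi n, pi 0 = c0 -> consistent s pi n ->
    (forall i, i <= n -> ~ T (pi i)) -> (forall c', ~ mv (pi n) c') -> endwin (pi n);
  wins_inf : forall pi, pi 0 = c0 -> (forall n, consistent s pi n) ->
    (forall i, ~ T (pi i)) -> infwin pi }.

Definition forces (T Ok : C -> Prop) (c0 : C) : Prop := exists s, wins_until T Ok s c0.

(* One strategy per configuration, chosen uniformly so that the combinators below
   can hand control over at configurations that are only known during the play. *)
Definition winning_strategy (T Ok : C -> Prop) (c : C) : strategy :=
  epsilon (inhabits any_move) (fun s => legal s /\ (forces T Ok c -> wins_until T Ok s c)).

Lemma winning_strategy_spec T Ok c :
  legal (winning_strategy T Ok c) /\ (forces T Ok c -> wins_until T Ok (winning_strategy T Ok c) c).
Proof.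
  unfold winning_strategy; apply epsilon_spec.
  destruct (classic (forces T Ok c)) as [[s Hs]|Hn].
  - exists s; split; [apply Hs|auto].
  - exists any_move; split; [apply legal_any_move|tauto].
Qed.

Lemma legal_winning_strategy T Ok c : legal (winning_strategy T Ok c).
Proof. exact (proj1 (winning_strategy_spec T Ok c)). Qed.

Lemma winning_strategy_wins T Ok c :
  forces T Ok c -> wins_until T Ok (winning_strategy T Ok c) c.
Proof. exact (proj2 (winning_strategy_spec T Ok c)). Qed.

Lemma forces_target T Ok c0 : T c0 -> Ok c0 -> forces T Ok c0.
Proof.
  intros HT HOk; exists any_move; split; [apply legal_any_move| | |].
  - intros pi [|n] H0 _ Hn _; [congruence|].
    exfalso; apply (Hn 0); [lia|congruence].
  - intros pi n H0 _ Hn _; exfalso; apply (Hn 0); [lia|congruence].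
  - intros pi H0 _ Hn; exfalso; apply (Hn 0); congruence.
Qed.

Context (infwin_shift : forall pi k, infwin (shift pi k) -> infwin pi).

Lemma forces_step T Ok c0 :
  ~ T c0 ->
  (eve c0 -> exists c1, mv c0 c1 /\ forces T Ok c1) ->
  (~ eve c0 -> forall c1, mv c0 c1 -> forces T Ok c1) ->
  ((forall c', ~ mv c0 c') -> endwin c0) ->
  forces T Ok c0.
Proof.
  intros HT Heve Hadam Hend.
  pose (m := epsilon (inhabits c0) (fun c1 => mv c0 c1 /\ forces T Ok c1)).
  assert (Hm : eve c0 -> mv c0 m /\ forces T Ok m) by (intros E; apply epsilon_spec; auto).
  pose (s0 := fun h c => if decP (c = c0) then m else any_move h c).
  pose (tau := winning_strategy T Ok).
  pose (s := resume from_second s0 tau).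
  assert (Hsuffix : forall pi n, pi 0 = c0 -> consistent s pi (1 + n) ->
            consistent (tau (pi 1)) (shift pi 1) n /\ wins_until T Ok (tau (pi 1)) (pi 1)).
  { intros pi n H0 Hc; split.
    - apply (consistent_resume_after from_second s0 tau pi 1 n); auto.
      intros i Hi; apply from_second_history; lia.
    - apply winning_strategy_wins. destruct Hc as [Hmv Hs].
      destruct (classic (eve c0)) as [E|E].
      + rewrite (Hs 0) by (rewrite ?H0; auto; lia).
        unfold s, resume, s0; simpl; rewrite H0, decP_true by reflexivity; apply Hm, E.
      + apply Hadam; auto; rewrite <- H0; apply Hmv; lia. }
  exists s; split.
  - apply legal_resume; [|apply legal_winning_strategy].
    intros h c He Hc; unfold s0; destruct (decP (c = c0)) eqn:Ec; [|apply legal_any_move; auto].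
    unfold decP in Ec; destruct excluded_middle_informative as [->|]; [apply Hm, He|discriminate].
  - intros pi [|n] H0 Hc Hn HTn; [congruence|].
    destruct (Hsuffix pi n H0 Hc) as [Hc' W].
    apply (wins_target _ _ _ _ W (shift pi 1) n); auto.
    intros i Hi; apply (Hn (1 + i)); lia.
  - intros pi [|n] H0 Hc Hn Hstuck; [rewrite H0 in *; auto|].
    destruct (Hsuffix pi n H0 Hc) as [Hc' W].
    apply (wins_end _ _ _ _ W (shift pi 1) n); auto.
    intros i Hi; apply (Hn (1 + i)); lia.
  - intros pi H0 Hc Hn; apply (infwin_shift pi 1).
    destruct (Hsuffix pi 0 H0 (Hc 1)) as [_ W].
    apply (wins_inf _ _ _ _ W); auto.
    + intros n; exact (proj1 (Hsuffix pi n H0 (Hc (1 + n)))).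
    + intros i; apply (Hn (1 + i)).
Qed.

Lemma forces_eve_move T Ok c0 c1 :
  ~ T c0 -> eve c0 -> mv c0 c1 -> forces T Ok c1 -> forces T Ok c0.
Proof.
  intros HT He Hmv H1; apply forces_step; eauto; [tauto|].
  intros Hstuck; exfalso; apply (Hstuck c1 Hmv).
Qed.

Lemma forces_adam_moves T Ok c0 :
  ~ T c0 -> ~ eve c0 -> (forall c1, mv c0 c1 -> forces T Ok c1) ->
  ((forall c', ~ mv c0 c') -> endwin c0) -> forces T Ok c0.
Proof. intros HT He Hall Hend; apply forces_step; auto; tauto. Qed.

Lemma wins_until_first_visit T Ok s c0 pi n :
  wins_until T Ok s c0 -> pi 0 = c0 -> consistent s pi n -> T (pi n) ->
  exists k, k <= n /\ T (pi k) /\ Ok (pi k).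
Proof.
  intros W H0 Hc HT.
  destruct (least_witness (fun i => T (pi i)) n HT) as [k [Hk [HTk Hmin]]].
  exists k; repeat split; auto.
  apply (wins_target _ _ _ _ W pi k); auto; apply (consistent_le s pi n); auto.
Qed.

Definition switch_strategy (T2 : C -> Prop) (s2 : strategy) (T1 Ok1 : C -> Prop) : strategy :=
  resume (first_index T2) s2 (winning_strategy T1 Ok1).

Lemma switch_before T2 s2 T1 Ok1 pi n :
  (forall i, i < n -> ~ T2 (pi i)) ->
  consistent (switch_strategy T2 s2 T1 Ok1) pi n -> consistent s2 pi n.
Proof.
  intros Hn; apply consistent_resume_before; intros i Hi.
  apply first_index_history_none; intros j Hj; apply Hn; lia.
Qed.

Lemma switch_after T2 s2 T1 Ok1 pi n k :
  k <= n -> T2 (pi k) -> (forall i, i < k -> ~ T2 (pi i)) ->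
  consistent (switch_strategy T2 s2 T1 Ok1) pi n ->
  consistent (winning_strategy T1 Ok1 (pi k)) (shift pi k) (n - k).
Proof.
  intros Hk HT Hmin Hc; apply consistent_resume_after with (anchor := first_index T2) (s0 := s2).
  - intros i Hi; apply first_index_history; auto; lia.
  - replace (k + (n - k)) with n by lia; exact Hc.
Qed.

Lemma forces_switch T1 Ok1 T2 Ok2 c0 :
  (forall c, T1 c -> T2 c) -> forces T2 Ok2 c0 ->
  (forall c, T2 c -> Ok2 c -> forces T1 Ok1 c) -> forces T1 Ok1 c0.
Proof.
  intros Hsub [s2 W2] Hcont.
  pose (s := switch_strategy T2 s2 T1 Ok1).
  pose (tau := winning_strategy T1 Ok1).
  assert (Hwins : forall pi n k, pi 0 = c0 -> consistent s pi n -> k <= n -> T2 (pi k) ->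
            (forall i, i < k -> ~ T2 (pi i)) -> wins_until T1 Ok1 (tau (pi k)) (pi k)).
  { intros pi n k H0 Hc Hk HT Hmin; apply winning_strategy_wins, Hcont; auto.
    apply (wins_target _ _ _ _ W2 pi k); auto.
    apply (switch_before T2 s2 T1 Ok1); auto; apply (consistent_le s pi n); auto. }
  exists s; split.
  - apply legal_resume; [apply W2|apply legal_winning_strategy].
  - intros pi n H0 Hc Hn HT1.
    destruct (least_witness (fun i => T2 (pi i)) n (Hsub _ HT1)) as [k [Hk [HT2 Hmin]]].
    rewrite <- (shift_sub pi k n Hk).
    apply (wins_target _ _ _ _ (Hwins pi n k H0 Hc Hk HT2 Hmin)); [apply shift_0| | |].
    + apply (switch_after T2 s2); auto.
    + intros i Hi; apply Hn; lia.
    + rewrite shift_sub; auto.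
  - intros pi n H0 Hc Hn Hstuck.
    destruct (classic (exists k, k <= n /\ T2 (pi k))) as [[k0 [Hk0 HT0]]|Hno].
    + destruct (least_witness (fun i => T2 (pi i)) k0 HT0) as [k [Hk [HT2 Hmin]]].
      rewrite <- (shift_sub pi k n) in * by lia.
      apply (wins_end _ _ _ _ (Hwins pi n k H0 Hc ltac:(lia) HT2 Hmin)); [apply shift_0| | |auto].
      * apply (switch_after T2 s2); auto; lia.
      * intros i Hi; apply Hn; lia.
    + apply (wins_end _ _ _ _ W2 pi n); auto.
      * apply (switch_before T2 s2 T1 Ok1); auto; intros i Hi HT; apply Hno; eauto with arith.
      * intros i Hi HT; apply Hno; eauto.
  - intros pi H0 Hc Hn.
    destruct (classic (exists k, T2 (pi k))) as [[k0 HT0]|Hno].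
    + destruct (least_witness (fun i => T2 (pi i)) k0 HT0) as [k [Hk [HT2 Hmin]]].
      apply (infwin_shift pi k).
      apply (wins_inf _ _ _ _ (Hwins pi k k H0 (Hc k) (le_n k) HT2 Hmin)); [apply shift_0| |].
      * intros m; replace m with (k + m - k) by lia; apply (switch_after T2 s2); auto; lia.
      * intros i; apply Hn.
    + apply (wins_inf _ _ _ _ W2); auto.
      * intros n; apply (switch_before T2 s2 T1 Ok1); auto; intros i _ HT; apply Hno; eauto.
      * intros i HT; apply Hno; eauto.
Qed.

Definition restart_strategy (R T Ok : C -> Prop) : strategy :=
  resume (last_index R) any_move (fun _ => resume from_second any_move (winning_strategy T Ok)).

Lemma legal_restart_strategy R T Ok : legal (restart_strategy R T Ok).
Proof.
  apply legal_resume; [apply legal_any_move|intros _].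
  apply legal_resume; [apply legal_any_move|apply legal_winning_strategy].
Qed.

Lemma restart_after R T Ok pi j n :
  R (pi j) -> (forall l, j < l <= S j + n -> ~ R (pi l)) ->
  consistent (restart_strategy R T Ok) pi (S j + n) ->
  consistent (winning_strategy T Ok (pi (S j))) (shift pi (S j)) n.
Proof.
  intros HR Hmax Hc.
  assert (Hseg : consistent (resume from_second any_move (winning_strategy T Ok))
                   (shift pi j) (1 + n)).
  { apply consistent_resume_after with (anchor := last_index R) (s0 := any_move)
      (tau := fun _ => resume from_second any_move (winning_strategy T Ok)).
    - intros i Hi; apply last_index_history; auto; [lia|intros l Hl; apply Hmax; lia].
    - replace (j + (1 + n)) with (S j + n) by lia; exact Hc. }
  pose proof (consistent_resume_after from_second any_move (winning_strategy T Ok)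
                (shift pi j) 1 n) as Hafter.
  change (shift pi j 1) with (pi (j + 1)) in Hafter.
  rewrite shift_shift, Nat.add_1_r in Hafter.
  apply Hafter; [intros i Hi; apply from_second_history; lia|exact Hseg].
Qed.

(* [R] marks the configurations where Eve restarts a strategy forcing [T2]; a play
   reaching [R] infinitely often never settles on one of these strategies. *)
Lemma forces_restart T1 Ok1 T2 Ok2 (R : C -> Prop) c0 :
  (forall c, T1 c -> T2 c) -> (forall c, R c -> ~ T1 c) ->
  (forall c, R c -> exists c', mv c c') ->
  (forall c c', R c -> mv c c' -> forces T2 Ok2 c') ->
  (forall c, T2 c -> Ok2 c -> (T1 c /\ Ok1 c) \/ R c) ->
  (forall pi, R (pi 0) -> (forall i, mv (pi i) (pi (S i))) -> (forall i, ~ T1 (pi i)) ->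
     (forall N, exists n, N <= n /\ R (pi n)) -> infwin pi) ->
  R c0 -> forces T1 Ok1 c0.
Proof.
  intros Hsub HRT HRmv HRnext HOk Hinf HR0.
  pose (s := restart_strategy R T2 Ok2).
  pose (tau := winning_strategy T2 Ok2).
  assert (Hseg : forall pi j n, consistent s pi (S j + n) -> R (pi j) ->
            (forall l, j < l <= S j + n -> ~ R (pi l)) ->
            consistent (tau (pi (S j))) (shift pi (S j)) n /\
            wins_until T2 Ok2 (tau (pi (S j))) (pi (S j))).
  { intros pi j n Hc HR Hmax; split; [apply (restart_after R); auto|].
    apply winning_strategy_wins, (HRnext (pi j)); auto; apply (proj1 Hc); lia. }
  assert (Hexit : forall pi j n m, consistent s pi (S j + n) -> R (pi j) ->
            (forall l, j < l <= S j + n -> ~ R (pi l)) -> m <= n -> T2 (pi (S j + m)) ->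
            exists k, k <= m /\ T1 (pi (S j + k)) /\ Ok1 (pi (S j + k))).
  { intros pi j n m Hc HR Hmax Hm HT.
    destruct (Hseg pi j n Hc HR Hmax) as [Hc' W].
    destruct (wins_until_first_visit _ _ _ _ (shift pi (S j)) m W) as [k [Hk [HTk Hok]]];
      [apply shift_0|apply (consistent_le _ _ n); auto|exact HT|].
    destruct (HOk _ HTk Hok) as [[HT1 HOk1]|HRk]; [exists k; auto|].
    exfalso; apply (Hmax (S j + k)); auto; lia. }
  exists s; split; [apply legal_restart_strategy| | |].
  - intros pi N H0 Hc Hn HT1.
    destruct (greatest_witness (fun i => R (pi i)) N) as [j [Hj [HRj Hmax]]]; [congruence|].
    assert (exists n, N = S j + n) as [n ->].
    { exists (N - S j); destruct (Nat.eq_dec j N) as [->|]; [exfalso; eapply HRT; eauto|lia]. }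
    destruct (Hexit pi j n n Hc HRj Hmax (le_n n) (Hsub _ HT1)) as [k [Hk [HT1k Hok]]].
    destruct (Nat.eq_dec k n) as [->|]; auto.
    exfalso; apply (Hn (S j + k)); auto; lia.
  - intros pi N H0 Hc Hn Hstuck.
    destruct (greatest_witness (fun i => R (pi i)) N) as [j [Hj [HRj Hmax]]]; [congruence|].
    assert (exists n, N = S j + n) as [n ->].
    { exists (N - S j); destruct (Nat.eq_dec j N) as [->|]; [|lia].
      destruct (HRmv _ HRj) as [c' Hc']; exfalso; apply (Hstuck c' Hc'). }
    destruct (Hseg pi j n Hc HRj Hmax) as [Hc' W].
    apply (wins_end _ _ _ _ W (shift pi (S j)) n); [apply shift_0|exact Hc'| |exact Hstuck].
    intros m Hm HT2; destruct (Hexit pi j n m Hc HRj Hmax Hm HT2) as [k [Hk [HT1 _]]].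
    apply (Hn (S j + k)); auto; lia.
  - intros pi H0 Hc Hn.
    destruct (classic (forall N, exists n, N <= n /\ R (pi n))) as [Hio|Hfin].
    { apply Hinf; auto; [congruence|intros i; apply (proj1 (Hc (S i))); lia]. }
    apply not_all_ex_not in Hfin as [N HN].
    destruct (greatest_witness (fun i => R (pi i)) N) as [j [Hj [HRj Hmax]]]; [congruence|].
    assert (Hlast : forall l, j < l -> ~ R (pi l)).
    { intros l Hl HR; destruct (le_lt_dec l N).
      - apply (Hmax l); auto; lia.
      - apply HN; exists l; split; [lia|exact HR]. }
    assert (Hlast' : forall n l, j < l <= S j + n -> ~ R (pi l)) by (intros n l Hl; apply Hlast; lia).
    apply (infwin_shift pi (S j)).
    apply (wins_inf _ _ _ _ (proj2 (Hseg pi j 0 (Hc _) HRj (Hlast' 0)))); [apply shift_0| |].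
    + intros n; apply (Hseg pi j n (Hc _) HRj (Hlast' n)).
    + intros m HT2; destruct (Hexit pi j m m (Hc _) HRj (Hlast' m) (le_n m) HT2) as [k [_ [HT1 _]]].
      apply (Hn _ HT1).
Qed.

End Games.

(** * Subformulas and binders *)

Section Subformulas.
Context {L : Type}.
Implicit Types (phi psi chi a : form L).

Lemma form_ind_children (P : form L -> Prop) :
  (forall psi, (forall chi, In chi (children psi) -> P chi) -> P psi) -> forall psi, P psi.
Proof. intros H psi; induction psi; apply H; simpl; intros chi Hchi; intuition subst; auto. Qed.

Lemma subf_child chi psi : In chi (children psi) -> subf chi psi.
Proof. intros H; eapply subf_step; eauto; constructor. Qed.

Lemma subf_trans a chi psi : subf a chi -> subf chi psi -> subf a psi.
Proof. intros H1 H2; induction H2; auto; eapply subf_step; eauto. Qed.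

Lemma subf_inv chi psi : subf chi psi -> chi = psi \/ exists c, In c (children psi) /\ subf chi c.
Proof. intros H; inversion H; subst; eauto. Qed.

Lemma bv_child chi psi : In chi (children psi) -> exists l1 l2, bv psi = l1 ++ bv chi ++ l2.
Proof.
  destruct psi; simpl; intros Hc; intuition subst;
    first [ exists [], []; rewrite app_nil_r; reflexivity
          | eexists [], _; reflexivity
          | eexists _, []; rewrite app_nil_r; reflexivity
          | eexists [_], []; rewrite app_nil_r; reflexivity ].
Qed.

Lemma bv_subf chi psi : subf chi psi -> exists l1 l2, bv psi = l1 ++ bv chi ++ l2.
Proof.
  induction 1 as [|psi c Hc _ [l1 [l2 E]]].
  - exists [], []; rewrite app_nil_r; reflexivity.
  - destruct (bv_child _ _ Hc) as [m1 [m2 E2]].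
    exists (m1 ++ l1), (l2 ++ m2); rewrite E2, E, !app_assoc; reflexivity.
Qed.

Lemma in_bv_subf Z chi psi : subf chi psi -> In Z (bv chi) -> In Z (bv psi).
Proof.
  intros H HZ; destruct (bv_subf _ _ H) as [l1 [l2 ->]].
  apply in_or_app; right; apply in_or_app; left; exact HZ.
Qed.

Lemma NoDup_bv_subf chi psi : subf chi psi -> NoDup (bv psi) -> NoDup (bv chi).
Proof.
  intros H HN; destruct (bv_subf _ _ H) as [l1 [l2 E]]; rewrite E in HN.
  apply NoDup_app_remove_l, NoDup_app_remove_r in HN; exact HN.
Qed.

Lemma binder_in_bv Z psi : (exists a, psi = fmu Z a \/ psi = fnu Z a) -> In Z (bv psi).
Proof. intros [a [-> | ->]]; simpl; auto. Qed.

Lemma binder_of_exists Z psi : In Z (bv psi) -> exists B, binder_of psi Z B.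
Proof.
  revert psi; apply (form_ind_children (fun psi => In Z (bv psi) -> exists B, binder_of psi Z B)).
  intros psi IH HZ.
  assert (Hcases : (exists a, psi = fmu Z a \/ psi = fnu Z a) \/
                   exists c, In c (children psi) /\ In Z (bv c)).
  { destruct psi; simpl in HZ |- *; try rewrite in_app_iff in HZ; intuition subst; eauto 7. }
  destruct Hcases as [Hb|[c [Hc HZc]]].
  - exists psi; split; [constructor|exact Hb].
  - destruct (IH c Hc HZc) as [B [HB Hb]].
    exists B; split; [eapply subf_trans; [exact HB|apply subf_child, Hc]|exact Hb].
Qed.

Lemma binder_child_not_bound Z psi c :
  (exists a, psi = fmu Z a \/ psi = fnu Z a) -> In c (children psi) -> NoDup (bv psi) ->
  ~ In Z (bv c).
Proof. intros [a [-> | ->]]; simpl; intros [<- | []] HN; inversion HN; auto. Qed.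

Lemma children_sharing_bv Z psi c c' :
  In c (children psi) -> In c' (children psi) -> NoDup (bv psi) ->
  In Z (bv c) -> In Z (bv c') -> c = c'.
Proof.
  intros Hc Hc' HN HZ HZ'.
  destruct psi; simpl in *; intuition subst; auto; exfalso; eapply NoDup_app_disjoint; eauto.
Qed.

Lemma binder_of_unique Z psi B B' :
  NoDup (bv psi) -> binder_of psi Z B -> binder_of psi Z B' -> B = B'.
Proof.
  revert B B'; revert psi.
  apply (form_ind_children (fun psi => forall B B', NoDup (bv psi) ->
           binder_of psi Z B -> binder_of psi Z B' -> B = B')).
  intros psi IH B B' HN [HB Hb] [HB' Hb'].
  destruct (subf_inv _ _ HB) as [->|[c [Hc Hsc]]];
    destruct (subf_inv _ _ HB') as [->|[c' [Hc' Hsc']]].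
  - reflexivity.
  - exfalso; apply (binder_child_not_bound Z psi c' Hb Hc' HN).
    apply (in_bv_subf Z B' c' Hsc'), binder_in_bv, Hb'.
  - exfalso; apply (binder_child_not_bound Z psi c Hb' Hc HN).
    apply (in_bv_subf Z B c Hsc), binder_in_bv, Hb.
  - assert (c = c') as <-.
    { apply (children_sharing_bv Z psi c c'); auto; eapply in_bv_subf; eauto;
        apply binder_in_bv; auto. }
    apply (IH c Hc); [apply (NoDup_bv_subf c psi); auto; apply subf_child, Hc
                     |split; auto|split; auto].
Qed.

Lemma occurs_free_child Y chi psi :
  In chi (children psi) -> occurs_free Y chi -> ~ In Y (bv psi) -> occurs_free Y psi.
Proof. destruct psi; simpl; intros Hc Ho Hn; intuition subst; auto. Qed.

Lemma occurs_free_of_not_bound Y psi : subf (fvar Y) psi -> ~ In Y (bv psi) -> occurs_free Y psi.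
Proof.
  induction 1 as [|psi c Hc _ IH]; intros Hn; [reflexivity|].
  apply (occurs_free_child Y c psi Hc); [apply IH|exact Hn].
  intros HY; apply Hn; eapply in_bv_subf; [apply subf_child, Hc|exact HY].
Qed.

End Subformulas.

Section Completeness.
Variables (M : TS) (V : nat -> Proc M -> Prop) (phi : form (Lab M)).
Hypothesis phi_pnf : pnf phi.
Implicit Types (psi a : form (Lab M)) (H : Proc M) (pi : nat -> conf M).

Definition reaches_var (Esc : nat -> Prop) (c : conf M) : Prop :=
  exists Y, snd c = fvar Y /\ Esc Y.

Definition var_true (E : nat -> Proc M -> Prop) (c : conf M) : Prop :=
  exists Y, snd c = fvar Y /\ E Y (fst c).

Local Notation eve_forces Esc E :=
  (@forces (conf M) (move phi) eve_pos (eve_wins_end V) (eve_wins_inf phi)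
     (reaches_var Esc) (var_true E)).

Lemma eve_wins_inf_shift pi k : eve_wins_inf phi (shift pi k) -> eve_wins_inf phi pi.
Proof.
  assert (Hio : forall Y, inf_often (shift pi k) Y -> inf_often pi Y).
  { intros Y HY N; destruct (HY N) as [n [Hn E]]; exists (k + n); split; [lia|exact E]. }
  assert (Hio' : forall Y, inf_often pi Y -> inf_often (shift pi k) Y).
  { intros Y HY N; destruct (HY (N + k)) as [n [Hn E]]; exists (n - k).
    unfold shift; replace (k + (n - k)) with n by lia; split; [lia|exact E]. }
  intros [Z [a [HZ [Ha Hout]]]]; exists Z, a; repeat split; auto.
Qed.

Lemma move_var_bound H Y c' : move phi (H, fvar Y) c' -> In Y (bv phi).
Proof. intros [B [[HB|HB] _]]; eapply in_bv_subf; eauto; simpl; auto. Qed.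

Lemma move_var_binder H Z B a c' :
  subf B phi -> B = fmu Z a \/ B = fnu Z a -> move phi (H, fvar Z) c' -> c' = (H, a).
Proof.
  intros HB Hb [B' [HB' ->]].
  assert (Hu : B = fmu Z B' \/ B = fnu Z B').
  { destruct HB' as [HB'|HB']; [left|right];
      apply (binder_of_unique Z phi); try apply phi_pnf; split; eauto. }
  destruct Hb as [->| ->], Hu as [Hu|Hu]; inversion Hu; reflexivity.
Qed.

Lemma move_var_within psi H Y c' :
  subf psi phi -> In Y (bv psi) -> move phi (H, fvar Y) c' -> subf (snd c') psi.
Proof.
  intros Hpsi HY Hm; destruct (binder_of_exists Y psi HY) as [B [HB [a Hb]]].
  rewrite (move_var_binder H Y B a c'); [|eapply subf_trans; eauto|exact Hb|exact Hm].
  apply (subf_trans _ B); auto; apply subf_child; destruct Hb as [->| ->]; simpl; auto.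
Qed.

Definition connective psi : Prop :=
  match psi with fvar _ | fmu _ _ | fnu _ _ => False | _ => True end.

Lemma connective_not_var Esc H psi : connective psi -> ~ reaches_var Esc (H, psi).
Proof. intros Hc [Y [E _]]; simpl in E; subst; exact Hc. Qed.

Lemma move_connective H psi c' : connective psi -> move phi (H, psi) c' -> In (snd c') (children psi).
Proof.
  destruct psi; simpl; try contradiction; intros _ Hm;
    repeat match goal with
           | Hm : exists _, _ |- _ => destruct Hm as [? Hm]
           | Hm : _ /\ _ |- _ => destruct Hm as [_ Hm]
           end;
    intuition subst; simpl; auto.
Qed.

Definition agree (E : nat -> Proc M -> Prop) : Prop :=
  forall Y H, ~ In Y (bv phi) -> (E Y H <-> V Y H).

Lemma agree_upd E Z Q : agree E -> In Z (bv phi) -> agree (upd E Z Q).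
Proof.
  intros HE HZ Y H HY; unfold upd; destruct (Nat.eqb_spec Y Z) as [->|]; [tauto|auto].
Qed.

(* [Esc] collects the variables at which a play leaves [psi]: the variables bound in
   [phi] but free in [psi]. *)
Definition escape_set (Esc : nat -> Prop) psi : Prop :=
  (forall Y, In Y (bv phi) -> occurs_free Y psi -> Esc Y) /\ (forall Y, Esc Y -> ~ In Y (bv psi)).

Lemma escape_set_child Esc psi a :
  connective psi -> In a (children psi) -> escape_set Esc psi -> escape_set Esc a.
Proof.
  intros Hc Ha [Hfree Hbound]; split.
  - intros Y HY Ho; apply Hfree; auto.
    destruct psi; simpl in *; try contradiction; intuition subst; auto.
  - intros Y HY Hin; apply (Hbound Y HY).
    destruct psi; simpl in *; try contradiction; intuition subst; auto using in_or_app.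
Qed.

Lemma escape_set_binder Esc psi Z a :
  psi = fmu Z a \/ psi = fnu Z a -> NoDup (bv psi) -> escape_set Esc psi ->
  escape_set (fun Y => Esc Y \/ Y = Z) a.
Proof.
  intros Hpsi HN [Hfree Hbound]; split.
  - intros Y HY Ho; destruct (Nat.eq_dec Y Z) as [|Hne]; auto.
    left; apply Hfree; auto; destruct Hpsi as [-> | ->]; simpl; auto.
  - intros Y [HS| ->] Hin; destruct Hpsi as [-> | ->]; inversion HN; subst; auto;
      apply (Hbound Y HS); simpl; auto.
Qed.

Definition truth_forces psi : Prop :=
  forall Esc E, agree E -> escape_set Esc psi -> forall H, sem E psi H -> eve_forces Esc E (H, psi).

Lemma truth_forces_var Z : truth_forces (fvar Z).
Proof.
  intros Esc E HE [Hfree _] H Hsem.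
  destruct (classic (Esc Z)) as [HS|HS]; [apply forces_target; exists Z; auto|].
  assert (HZ : ~ In Z (bv phi)) by (intros HZ; apply HS, Hfree; simpl; auto).
  apply (forces_adam_moves eve_wins_inf_shift).
  - intros [Y [E1 HY]]; simpl in E1; injection E1 as ->; contradiction.
  - intros [].
  - intros c1 Hm; exfalso; apply HZ; eapply move_var_bound; eauto.
  - intros _; apply (HE Z H HZ), Hsem.
Qed.

Lemma truth_forces_neg a : subf (fneg a) phi -> truth_forces (fneg a).
Proof.
  intros Hsub Esc E HE _ H Hsem.
  destruct (proj1 phi_pnf a Hsub) as [Y ->].
  assert (HY : ~ In Y (bv phi)).
  { intros HY; apply (proj2 (proj2 (proj2 phi_pnf) Y HY)), Hsub. }
  apply (forces_adam_moves eve_wins_inf_shift); [apply connective_not_var; exact I|intros []|intros _ []|].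
  intros _ HV; apply Hsem, (HE Y H HY), HV.
Qed.

Lemma truth_forces_eve psi :
  connective psi -> (forall H, eve_pos (H, psi)) ->
  (forall a, In a (children psi) -> truth_forces a) ->
  (forall E H, sem E psi H -> exists H' a, move phi (H, psi) (H', a) /\ sem E a H') ->
  truth_forces psi.
Proof.
  intros Hc Heve IH Hstep Esc E HE Hesc H Hsem.
  destruct (Hstep E H Hsem) as [H' [a [Hm Ha]]].
  pose proof (move_connective H psi _ Hc Hm) as Hch.
  apply (forces_eve_move eve_wins_inf_shift) with (c1 := (H', a));
    [apply connective_not_var, Hc|apply Heve|exact Hm|].
  apply IH; auto; eapply escape_set_child; eauto.
Qed.

Lemma truth_forces_adam psi :
  connective psi -> (forall H, ~ eve_pos (H, psi)) ->
  (forall a, In a (children psi) -> truth_forces a) ->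
  (forall H, eve_wins_end V (H, psi) \/ exists c', move phi (H, psi) c') ->
  (forall E H H' a, sem E psi H -> move phi (H, psi) (H', a) -> sem E a H') ->
  truth_forces psi.
Proof.
  intros Hc Hadam IH Hend Hstep Esc E HE Hesc H Hsem.
  apply (forces_adam_moves eve_wins_inf_shift); [apply connective_not_var, Hc|apply Hadam| |].
  - intros [H' a] Hm; pose proof (move_connective H psi _ Hc Hm) as Hch.
    apply IH; auto; [eapply escape_set_child; eauto|eapply Hstep; eauto].
  - intros Hstuck; destruct (Hend H) as [|[c' Hm]]; [auto|exfalso; apply (Hstuck c' Hm)].
Qed.

Lemma truth_forces_and a b :
  (forall c, In c (children (fand a b)) -> truth_forces c) -> truth_forces (fand a b).
Proof.
  intros IH; apply truth_forces_adam; [exact I|intros ? []|exact IH| |].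
  - intros H; right; exists (H, a); left; reflexivity.
  - intros E H H' c [Ha Hb] [Hm|Hm]; injection Hm as -> ->; auto.
Qed.

Lemma truth_forces_or a b :
  (forall c, In c (children (f_or a b)) -> truth_forces c) -> truth_forces (f_or a b).
Proof.
  intros IH; apply truth_forces_eve; [exact I|intros ?; exact I|exact IH|].
  intros E H Hsem; destruct (classic (sem E a H)) as [Ha|Ha].
  - exists H, a; split; [left|]; auto.
  - exists H, b; split; [right; reflexivity|apply NNPP; intros Hb; apply Hsem; auto].
Qed.

Lemma truth_forces_diac x a :
  (forall c, In c (children (fdiac x a)) -> truth_forces c) -> truth_forces (fdiac x a).
Proof.
  intros IH; apply truth_forces_eve; [exact I|intros ?; exact I|exact IH|].
  intros E H [r [hr [Hr [Hl [Hle Ha]]]]]; exists (succP r hr), a.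
  split; [exists r, hr; auto|exact Ha].
Qed.

Lemma truth_forces_dianc x a :
  (forall c, In c (children (fdianc x a)) -> truth_forces c) -> truth_forces (fdianc x a).
Proof.
  intros IH; apply truth_forces_eve; [exact I|intros ?; exact I|exact IH|].
  intros E H [r [hr [Hr [Hl [Hle Ha]]]]]; exists (succP r hr), a.
  split; [exists r, hr; auto|exact Ha].
Qed.

Lemma truth_forces_diao a :
  (forall c, In c (children (fdiao a)) -> truth_forces c) -> truth_forces (fdiao a).
Proof.
  intros IH; apply truth_forces_eve; [exact I|intros ?; exact I|exact IH|].
  intros E H [H' [Ht [Hq Ha]]]; exists H', a; split; [exists H'; auto|exact Ha].
Qed.

Lemma truth_forces_boxc x a :
  (forall c, In c (children (fboxc x a)) -> truth_forces c) -> truth_forces (fboxc x a).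
Proof.
  intros IH; apply truth_forces_adam; [exact I|intros ? []|exact IH|left; exact I|].
  intros E H H' a' Hsem [r [hr [Hr [Hl [Hle Hm]]]]]; injection Hm as -> ->.
  apply NNPP; intros Hn; apply Hsem; exists r, hr; auto.
Qed.

Lemma truth_forces_boxnc x a :
  (forall c, In c (children (fboxnc x a)) -> truth_forces c) -> truth_forces (fboxnc x a).
Proof.
  intros IH; apply truth_forces_adam; [exact I|intros ? []|exact IH|left; exact I|].
  intros E H H' a' Hsem [r [hr [Hr [Hl [Hle Hm]]]]]; injection Hm as -> ->.
  apply NNPP; intros Hn; apply Hsem; exists r, hr; auto.
Qed.

Lemma truth_forces_boxo a :
  (forall c, In c (children (fboxo a)) -> truth_forces c) -> truth_forces (fboxo a).
Proof.
  intros IH; apply truth_forces_adam; [exact I|intros ? []|exact IH|left; exact I|].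
  intros E H H' a' Hsem [H'' [Ht [Hq Hm]]]; injection Hm as -> ->.
  apply NNPP; intros Hn; apply Hsem; exists H''; auto.
Qed.

Lemma escape_set_binder_facts Esc B Z a :
  subf B phi -> B = fmu Z a \/ B = fnu Z a -> escape_set Esc B ->
  NoDup (bv B) /\ In Z (bv phi) /\ ~ Esc Z.
Proof.
  intros Hsub HB Hesc.
  assert (HZ : In Z (bv B)) by (apply binder_in_bv; eauto).
  split; [apply (NoDup_bv_subf _ phi Hsub), phi_pnf|].
  split; [apply (in_bv_subf Z _ _ Hsub HZ)|intros HS; apply (proj2 Hesc Z HS HZ)].
Qed.

Lemma truth_forces_mu Z a : subf (fmu Z a) phi -> truth_forces a -> truth_forces (fmu Z a).
Proof.
  intros Hsub IH Esc E HE Hesc H Hsem.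
  destruct (escape_set_binder_facts Esc _ Z a Hsub (or_introl eq_refl) Hesc) as [HN [HZ HSZ]].
  pose (W := fun H' => eve_forces Esc E (H', fvar Z)).
  assert (Hpre : forall H', sem (upd E Z W) a H' -> W H').
  { intros H' Ha.
    apply (forces_adam_moves eve_wins_inf_shift);
      [intros [Y [E1 HY]]; simpl in E1; injection E1 as <-; contradiction|intros []| |].
    - intros c1 Hm; rewrite (move_var_binder H' Z _ a c1 Hsub (or_introl eq_refl) Hm).
      apply (forces_switch eve_wins_inf_shift)
        with (T2 := reaches_var (fun Y => Esc Y \/ Y = Z)) (Ok2 := var_true (upd E Z W)).
      + intros c [Y [E1 HY]]; exists Y; auto.
      + apply IH; [apply agree_upd; auto|apply (escape_set_binder Esc (fmu Z a)); auto|exact Ha].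
      + intros [H'' b] [Y [E1 HY]] [Y' [E2 HV]]; simpl in E1, E2, HV; subst b.
        injection E2 as <-; unfold upd in HV.
        destruct (Nat.eqb_spec Y Z) as [->|Hne]; [exact HV|].
        apply forces_target; exists Y; split; auto; destruct HY; [auto|contradiction].
    - intros Hstuck; exfalso; apply (Hstuck (H', a)); exists a; auto. }
  apply (forces_adam_moves eve_wins_inf_shift); [intros [Y [[=] _]]|intros []| |].
  - intros c1 Hm; simpl in Hm; subst c1; exact (Hsem W Hpre).
  - intros Hstuck; exfalso; apply (Hstuck (H, fvar Z)); reflexivity.
Qed.

Definition within psi b : Prop := subf b psi \/ exists Y, b = fvar Y /\ In Y (bv psi).

Lemma move_within Esc psi H b c' :
  subf psi phi -> (forall Y, In Y (bv phi) -> occurs_free Y psi -> Esc Y) ->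
  within psi b -> ~ reaches_var Esc (H, b) -> move phi (H, b) c' -> within psi (snd c').
Proof.
  intros Hpsi Hfree [Hb|[Y [-> HY]]] Hnot Hm; [|left; eapply move_var_within; eauto].
  destruct (classic (connective b)) as [Hc|Hc].
  { left; apply (subf_trans _ b); [apply subf_child, (move_connective H b c' Hc Hm)|exact Hb]. }
  destruct b as [Y| | | | | | | | | |Z a|Z a]; simpl in Hc; try (exfalso; apply Hc; exact I).
  - destruct (classic (In Y (bv psi))) as [HY|HY]; [left; eapply move_var_within; eauto|].
    exfalso; apply Hnot; exists Y; split; [reflexivity|].
    apply Hfree; [eapply move_var_bound; eauto|apply occurs_free_of_not_bound; auto].
  - right; simpl in Hm; subst c'; exists Z; split; [reflexivity|].
    apply (in_bv_subf Z _ _ Hb); simpl; auto.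
  - right; simpl in Hm; subst c'; exists Z; split; [reflexivity|].
    apply (in_bv_subf Z _ _ Hb); simpl; auto.
Qed.

Lemma nu_loop_wins Esc Z a pi :
  subf (fnu Z a) phi -> (forall Y, In Y (bv phi) -> occurs_free Y (fnu Z a) -> Esc Y) ->
  snd (pi 0) = fvar Z -> (forall i, move phi (pi i) (pi (S i))) ->
  (forall i, ~ reaches_var Esc (pi i)) -> inf_often pi Z -> eve_wins_inf phi pi.
Proof.
  intros Hsub Hfree H0 Hmv Hnot HZ.
  assert (Hwithin : forall i, within (fnu Z a) (snd (pi i))).
  { induction i as [|i IH]; [right; exists Z; rewrite H0; simpl; auto|].
    pose proof (Hmv i) as Hm; pose proof (Hnot i) as Hn.
    revert IH Hm Hn; destruct (pi i) as [Hi bi]; intros IH Hm Hn.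
    eapply move_within; eauto. }
  exists Z, a; split; [exact HZ|split; [exact Hsub|]].
  intros Y HY; destruct (HY 0) as [n [_ En]].
  assert (HYa : In Y (bv (fnu Z a))).
  { destruct (Hwithin n) as [Hs|[Y' [E HY']]]; rewrite En in *.
    - destruct (classic (In Y (bv (fnu Z a)))) as [|Hnb]; auto; exfalso.
      apply (Hnot n); exists Y; split; auto.
      apply Hfree; [|apply occurs_free_of_not_bound; auto].
      apply (move_var_bound (fst (pi n)) Y (pi (S n))).
      rewrite <- En, <- surjective_pairing; apply Hmv.
    - injection E as E; subst; exact HY'. }
  destruct (binder_of_exists Y _ HYa) as [B [HB Hb]].
  exists B; split; [split; [eapply subf_trans; eauto|exact Hb]|exact HB].
Qed.

Lemma truth_forces_nu Z a : subf (fnu Z a) phi -> truth_forces a -> truth_forces (fnu Z a).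
Proof.
  intros Hsub IH Esc E HE Hesc H Hsem.
  destruct (escape_set_binder_facts Esc _ Z a Hsub (or_intror eq_refl) Hesc) as [HN [HZ HSZ]].
  apply not_all_ex_not in Hsem as [Q HQ]; apply imply_to_and in HQ as [HQpre HQH].
  pose (P := fun H' => ~ Q H').
  assert (Hpost : forall H', P H' -> sem (upd E Z P) a H').
  { intros H' HP; apply NNPP; intros Hn; exact (HP (HQpre H' Hn)). }
  assert (Hloop : eve_forces Esc E (H, fvar Z)).
  { apply (forces_restart eve_wins_inf_shift)
      with (T2 := reaches_var (fun Y => Esc Y \/ Y = Z)) (Ok2 := var_true (upd E Z P))
           (R := fun c => snd c = fvar Z /\ P (fst c)); [| | | | | |split; [reflexivity|exact HQH]].
    - intros c [Y [E1 HY]]; exists Y; auto.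
    - intros c [E1 _] [Y [E2 HY]]; rewrite E1 in E2; injection E2 as <-; contradiction.
    - intros [H' b] [E1 _]; simpl in E1; subst b; exists (H', a), a; auto.
    - intros [H' b] c' [E1 HP] Hm; simpl in E1, HP; subst b.
      rewrite (move_var_binder H' Z _ a c' Hsub (or_intror eq_refl) Hm).
      apply IH; [apply agree_upd; auto|apply (escape_set_binder Esc (fnu Z a)); auto|apply Hpost, HP].
    - intros [H' b] [Y [E1 HY]] [Y' [E2 HV]]; simpl in E1, E2, HV; subst b.
      injection E2 as <-; unfold upd in HV.
      destruct (Nat.eqb_spec Y Z) as [->|Hne]; [right; split; auto|left].
      destruct HY as [HY|]; [|contradiction]; split; exists Y; auto.
    - intros pi [HR0 _] Hmv Hnot Hio; apply (nu_loop_wins Esc Z a pi); auto; [apply Hesc|].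
      intros N; destruct (Hio N) as [n [Hn [En _]]]; eauto. }
  apply (forces_adam_moves eve_wins_inf_shift); [intros [Y [[=] _]]|intros []| |].
  - intros c1 Hm; simpl in Hm; subst c1; exact Hloop.
  - intros Hstuck; exfalso; apply (Hstuck (H, fvar Z)); reflexivity.
Qed.

Lemma truth_forces_subformula psi : subf psi phi -> truth_forces psi.
Proof.
  revert psi; apply (form_ind_children (fun psi => subf psi phi -> truth_forces psi)).
  intros psi IH Hsub.
  assert (Hch : forall a, In a (children psi) -> truth_forces a).
  { intros a Ha; apply IH; [exact Ha|apply (subf_trans _ psi); auto; apply subf_child, Ha]. }
  destruct psi.
  - apply truth_forces_var.
  - apply truth_forces_neg, Hsub.
  - apply truth_forces_and, Hch.
  - apply truth_forces_or, Hch.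
  - apply truth_forces_diac, Hch.
  - apply truth_forces_boxc, Hch.
  - apply truth_forces_dianc, Hch.
  - apply truth_forces_boxnc, Hch.
  - apply truth_forces_diao, Hch.
  - apply truth_forces_boxo, Hch.
  - apply truth_forces_mu; [exact Hsub|apply Hch; left; reflexivity].
  - apply truth_forces_nu; [exact Hsub|apply Hch; left; reflexivity].
Qed.

End Completeness.

Theorem theorem7 (M : TS) (V : nat -> Proc M -> Prop) (phi : form (Lab M)) :
  TSI_axioms M -> image_finite M -> pnf phi ->
  sem V phi (H0 M) ->
  eve_has_winning_strategy V phi (H0 M, phi).
Proof.
  intros _ _ Hpnf Hsem.
  destruct (truth_forces_subformula M V phi Hpnf phi (subf_refl _) (fun _ => False) V)
    with (H := H0 M) as [sigma W]; auto.
  { intros Y H _; tauto. }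
  { split; [intros Y HY Ho; apply (proj1 (proj2 (proj2 Hpnf) Y HY) Ho)|tauto]. }
  exists sigma; split; [apply W|split].
  - intros pi n H0 Hmv Hs Hstuck; apply (wins_end _ _ _ _ W pi n); auto.
    + split; auto.
    + intros i _ [Y [_ []]].
  - intros pi H0 Hmv Hs; apply (wins_inf _ _ _ _ W pi); auto.
    + intros n; split; auto.
    + intros i [Y [_ []]].
Qed.
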